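(* Suppose that $\phi\in\mathbb{Q}(x)$ has degree $2$, has a $2$-periodic critical point, and that $\operatorname{Aut}(\phi)$ is nontrivial. Then $\phi$ is linearly conjugate over $\mathbb{Q}$ to a map of the form $\psi_v=\dfrac{2x-1}{vx^2-1}$ with $v\in\mathbb{Q}\setminus\{0,4\}$.
   Context: A point $P\in\mathbb{P}^1(\overline{\mathbb{Q}})$ is $2$-periodic if $\phi^2(P)=P\neq\phi(P)$; a critical point is a point where $\phi:\mathbb{P}^1\to\mathbb{P}^1$ ramifies. $\operatorname{Aut}(\phi)$ is the group of degree-one $\sigma\in\overline{\mathbb{Q}}(x)$ with $\sigma^{-1}\circ\phi\circ\sigma=\phi$. Linear conjugacy over $\mathbb{Q}$: $\psi=\sigma^{-1}\circ\phi\circ\sigma$ for some degree-one $\sigma\in\mathbb{Q}(x)$. *)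

(* Qbar is modelled by algC (the algebraic numbers). *)
From mathcomp Require Import all_boot all_order all_algebra all_field.
Set Implicit Arguments. Unset Strict Implicit. Unset Printing Implicit Defensive.
Import Order.TTheory GRing.Theory Num.Theory.
Local Open Scope ring_scope.

(* Binary quadratic form a X^2 + b X Y + c Y^2, coefficients (a,b,c). *)
Definition form2 (R : Type) := (R * R * R)%type.

(* Points of P^1(Qbar) are nonzero pairs (X,Y) up to scaling. *)
Definition pt := (algC * algC)%type.
Definition nzpt (p : pt) : bool := p != (0, 0).
Definition peq (p q : pt) : bool := p.1 * q.2 == p.2 * q.1.

Definition feval (f : form2 algC) (p : pt) : algC :=
  let: (a, b, c) := f in a * p.1 ^+ 2 + b * p.1 * p.2 + c * p.2 ^+ 2.

Definition fratr (f : form2 rat) : form2 algC :=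
  let: (a, b, c) := f in (ratr a, ratr b, ratr c).

(* A map [F : G] given by a pair of binary quadratic forms. *)
Definition hmap2 := (form2 algC * form2 algC)%type.
Definition hmapQ (F G : form2 rat) : hmap2 := (fratr F, fratr G).
Definition app2 (phi : hmap2) (p : pt) : pt := (feval phi.1 p, feval phi.2 p).

(* F and G have no common zero on P^1(Qbar): phi = F/G has degree exactly 2. *)
Definition deg2 (phi : hmap2) : Prop := forall p, nzpt p -> nzpt (app2 phi p).

(* Degree-one maps (Moebius transformations) x |-> (a x + b)/(c x + d). *)
Definition mob (R : Type) := (R * R * R * R)%type.
Definition mob_ok (s : mob algC) : bool :=
  let: (a, b, c, d) := s in a * d - b * c != 0.
Definition appM (s : mob algC) (p : pt) : pt :=
  let: (a, b, c, d) := s in (a * p.1 + b * p.2, c * p.1 + d * p.2).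
Definition mratr (s : mob rat) : mob algC :=
  let: (a, b, c, d) := s in (ratr a, ratr b, ratr c, ratr d).

Definition periodic2 (phi : hmap2) (P : pt) : Prop :=
  nzpt P /\ peq (app2 phi (app2 phi P)) P /\ ~~ peq (app2 phi P) P.

(* P is critical: phi ramifies at P, i.e. P occurs with multiplicity >= 2 in the
   fibre phi^{-1}(phi(P)); the fibre is cut out by the quadratic form
   H(Q) = F(Q) G(P) - G(Q) F(P), so H must be a multiple of (y0 X - x0 Y)^2. *)
Definition critical (phi : hmap2) (P : pt) : Prop :=
  nzpt P /\ exists c : algC, forall Q : pt,
    feval phi.1 Q * feval phi.2 P - feval phi.2 Q * feval phi.1 P
    = c * (P.2 * Q.1 - P.1 * Q.2) ^+ 2.

(* Aut(phi) nontrivial: some degree-one sigma over Qbar, not the identity,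
   with sigma^{-1} o phi o sigma = phi (equivalently phi o sigma = sigma o phi). *)
Definition nontrivial_aut (phi : hmap2) : Prop :=
  exists s : mob algC, mob_ok s /\
    (exists P, nzpt P /\ ~~ peq (appM s P) P) /\
    (forall P, nzpt P -> peq (appM s (app2 phi P)) (app2 phi (appM s P))).

(* psi_v = (2x - 1)/(v x^2 - 1), homogenised: [2XY - Y^2 : vX^2 - Y^2]. *)
Definition psiF : form2 rat := (0, 2, -1).
Definition psiG (v : rat) : form2 rat := (v, 0, -1).

(* psi = sigma^{-1} o phi o sigma with sigma degree-one over Q
   (equivalently phi o sigma = sigma o psi as maps on P^1(Qbar)). *)
Definition lin_conj_Q (phi psi : hmap2) : Prop :=
  exists s : mob rat, mob_ok (mratr s) /\
    forall P, nzpt P -> peq (app2 phi (appM (mratr s) P)) (appM (mratr s) (app2 psi P)).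

(* Conjugating by the Moebius map sending oo, 0 to phi(P), P, where P is the
   critical 2-periodic point, puts phi in the normal form [aXY + DY^2 : eX^2],
   whose critical 2-cycle is 0 -> oo -> 0.  If a <> 0, the only other critical
   point is C = (-2D : a), and an automorphism, which permutes the critical
   points, is trivial: fixing 0 forces it to be diagonal and to fix C, while
   moving 0 to C would make C 2-periodic, hence fixed, so that the automorphism
   would identify oo with 0.  Thus a = 0 and phi is conjugate over Qbar to
   x |-> k/x^2.  Such a map has a rational point x0 whose orbit x0, x1, x2 has
   three distinct points; the rational Moebius map sending oo, 0, 1 to x0, x1, x2
   conjugates phi to a map with oo -> 0 -> 1 that, like every conjugate of
   k/x^2, is divergence free as a pair of quadratic forms, and these conditions
   leave exactly the maps psi_v.  The values v = 0, 4 are excluded because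
   psi_v then has degree < 2. *)

From mathcomp Require Import all_boot all_order all_algebra all_field.
From mathcomp Require Import ring.
Import GRing.Theory Num.Theory.
Local Open Scope ring_scope.
Set Implicit Arguments. Unset Strict Implicit. Unset Printing Implicit Defensive.

Lemma mulf_eq0_r (R : idomainType) (x y : R) : x != 0 -> x * y = 0 -> y = 0.
Proof. by move=> x0 /eqP; rewrite mulf_eq0 (negbTE x0) => /eqP. Qed.

Lemma exists_nat_nonroot (R : numDomainType) (p : {poly R}) :
  p != 0 -> exists n : nat, ~~ root p n%:R.
Proof.
move=> p0.
pose nonroot (n : nat) := ~~ root p n%:R.
have [/hasP [n _ hn]|/hasPn roots] := boolP (has nonroot (iota 0 (size p))); first by exists n.
suff : (size p < size p)%N by rewrite ltnn.
rewrite -[X in (X < _)%N](size_iota 0) -(size_map (fun n : nat => n%:R : R)).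
apply: max_poly_roots p0 _ _.
- by apply/allP => _ /mapP [n /roots /negPn rn ->].
- by rewrite map_inj_uniq ?iota_uniq // => i j /eqP; rewrite eqr_nat => /eqP.
Qed.

Lemma lin_poly_neq0 (R : nzRingType) (a b : R) :
  (a != 0) || (b != 0) -> a *: 'X + b%:P != 0.
Proof.
apply: contraTT; rewrite negbK => /eqP h.
have := congr1 (coefp 0) h; have := congr1 (coefp 1) h.
rewrite /= !(coefD, coefZ, coefX, coefC, coef0) /= mulr1 mulr0 addr0 add0r.
by move=> -> ->; rewrite eqxx.
Qed.

Definition pdet (R : comPzRingType) (p q : R * R) : R := p.1 * q.2 - p.2 * q.1.
Definition scalept (k : algC) (p : pt) : pt := (k * p.1, k * p.2).

Lemma peqE p q : peq p q = (pdet p q == 0).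
Proof. by rewrite /peq /pdet subr_eq0. Qed.

Lemma nzptE p : nzpt p = (p.1 != 0) || (p.2 != 0).
Proof. by case: p => x y; rewrite /nzpt xpair_eqE negb_and. Qed.

Lemma pdetxx (p : pt) : pdet p p = 0.
Proof. by rewrite /pdet mulrC subrr. Qed.

Lemma pdet0_sym (p q : pt) : pdet p q = 0 -> pdet q p = 0.
Proof.
move=> h; have -> : pdet q p = - pdet p q by rewrite /pdet; ring.
by rewrite h oppr0.
Qed.

Lemma pdetZl k (p q : pt) : pdet (scalept k p) q = k * pdet p q.
Proof. by rewrite /pdet /=; ring. Qed.

Lemma pdetZr k (p q : pt) : pdet p (scalept k q) = k * pdet p q.
Proof. by rewrite /pdet /=; ring. Qed.

Lemma pdet0_scale (p q : pt) : nzpt q -> pdet p q = 0 -> exists k, p = scalept k q.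
Proof.
case: p q => x1 x2 [y1 y2]; rewrite nzptE /pdet /scalept /=.
move=> /orP [] y0 /eqP; rewrite subr_eq0 => /eqP h.
- by exists (x1 / y1); congr pair; [field | rewrite mulrAC h mulfK].
- by exists (x2 / y2); congr pair; [rewrite mulrAC -h mulfK | field].
Qed.

Lemma pdet0_trans (p q r : pt) : nzpt q -> pdet p q = 0 -> pdet q r = 0 -> pdet p r = 0.
Proof.
move=> q0 /(pdet0_scale q0) [k ->] /pdet0_sym /(pdet0_scale q0) [l ->].
by rewrite pdetZl pdetZr pdetxx !mulr0.
Qed.

Lemma nzptZ k p : k != 0 -> nzpt p -> nzpt (scalept k p).
Proof. by move=> k0; rewrite !nzptE /= !mulf_eq0 (negbTE k0). Qed.

Definition mdet (s : mob algC) : algC := let: (a, b, c, d) := s in a * d - b * c.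
Definition adjm (s : mob algC) : mob algC := let: (a, b, c, d) := s in (d, - b, - c, a).
Definition mmul (s t : mob algC) : mob algC :=
  let: (a, b, c, d) := s in let: (a', b', c', d') := t in
  (a * a' + b * c', a * b' + b * d', c * a' + d * c', c * b' + d * d').

Lemma mob_okE s : mob_ok s = (mdet s != 0).
Proof. by case: s => [[[a b] c] d]. Qed.

Lemma mdet_adjm s : mdet (adjm s) = mdet s.
Proof. by case: s => [[[a b] c] d] /=; ring. Qed.

Lemma mdet_mmul s t : mdet (mmul s t) = mdet s * mdet t.
Proof. by case: s => [[[? ?] ?] ?]; case: t => [[[? ?] ?] ?] /=; ring. Qed.

Lemma appM_mmul s t p : appM (mmul s t) p = appM s (appM t p).
Proof. by case: s => [[[? ?] ?] ?]; case: t => [[[? ?] ?] ?] /=; congr pair; ring. Qed.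

Lemma appM_adjm s p : appM s (appM (adjm s) p) = scalept (mdet s) p.
Proof. by case: s => [[[a b] c] d]; rewrite /scalept /=; congr pair; ring. Qed.

Lemma adjm_appM s p : appM (adjm s) (appM s p) = scalept (mdet s) p.
Proof. by case: s => [[[a b] c] d]; rewrite /scalept /=; congr pair; ring. Qed.

Lemma appMZ s k p : appM s (scalept k p) = scalept k (appM s p).
Proof. by case: s => [[[a b] c] d]; rewrite /scalept /=; congr pair; ring. Qed.

Lemma pdet_appM s p q : pdet (appM s p) (appM s q) = mdet s * pdet p q.
Proof. by case: s => [[[a b] c] d]; rewrite /pdet /=; ring. Qed.

Lemma pdet_adjm s p q : pdet p (appM s q) = pdet (appM (adjm s) p) q.
Proof. by case: s => [[[a b] c] d]; rewrite /pdet /=; ring. Qed.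

Lemma nzpt_appM s p : mdet s != 0 -> nzpt p -> nzpt (appM s p).
Proof.
move=> s0 p0; apply: contraTT (nzptZ s0 p0); rewrite negbK -adjm_appM => /eqP ->.
by case: s {s0} => [[[a b] c] d]; rewrite /nzpt /= !mulr0 addr0 eqxx.
Qed.

Definition is_scalar_mob (s : mob algC) : Prop :=
  let: (s1, s2, s3, s4) := s in [/\ s2 = 0, s3 = 0 & s1 = s4].

Lemma is_scalar_mobP s : is_scalar_mob s -> exists k, forall p, appM s p = scalept k p.
Proof.
case: s => [[[s1 s2] s3] s4] [-> -> ->]; exists s4 => p.
by rewrite /scalept /=; congr pair; ring.
Qed.

Lemma app2Z (phi : hmap2) k p : app2 phi (scalept k p) = scalept (k ^+ 2) (app2 phi p).
Proof.
by case: phi => [[[f1 f2] f3] [[g1 g2] g3]]; rewrite /app2 /feval /scalept /=; congr pair; ring.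
Qed.

Lemma feval_lincomb (f : form2 algC) (x y q : pt) :
  feval f (x.1 * q.1 + y.1 * q.2, x.2 * q.1 + y.2 * q.2) =
  q.1 ^+ 2 * feval f x + q.1 * q.2 * (feval f (x.1 + y.1, x.2 + y.2) - feval f x - feval f y)
  + q.2 ^+ 2 * feval f y.
Proof. by case: f => [[f1 f2] f3]; rewrite /feval /=; ring. Qed.

Lemma two_neq0 : (2 : algC) != 0.
Proof. by rewrite pnatr_eq0. Qed.

Section NormalForm.

Variables (a D e : algC).
Hypotheses (D_neq0 : D != 0) (e_neq0 : e != 0).

(* A point (x, y) stands for x/y, so 0 = (0, 1) and oo = (1, 0). *)
Definition nf (q : pt) : pt := (a * q.1 * q.2 + D * q.2 ^+ 2, e * q.1 ^+ 2).

(* For a map of degree two, y is critical iff its fibre is the single point y. *)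
Definition crit_nf (y : pt) : Prop :=
  forall z, nzpt z -> pdet (nf z) (nf y) = 0 -> pdet z y = 0.

Definition aut_nf (s : mob algC) : Prop :=
  forall q, nzpt q -> pdet (appM s (nf q)) (nf (appM s q)) = 0.

Lemma nfZ k p : nf (scalept k p) = scalept (k ^+ 2) (nf p).
Proof. by rewrite /nf /scalept /=; congr pair; ring. Qed.

Lemma nzpt_nf p : nzpt p -> nzpt (nf p).
Proof.
case: p => x y; rewrite !nzptE /nf /=.
have [-> /= y0|x0 _] := eqVneq x 0; last by rewrite mulf_neq0 ?expf_neq0 ?orbT.
by rewrite mulr0 mul0r add0r mulf_neq0 ?expf_neq0.
Qed.

Lemma nf_pdet0 p q : nzpt q -> pdet p q = 0 -> pdet (nf p) (nf q) = 0.
Proof. by move=> q0 /(pdet0_scale q0) [k ->]; rewrite nfZ pdetZl pdetxx mulr0. Qed.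

Lemma crit_nf_aut s y : mdet s != 0 -> aut_nf s -> nzpt y -> crit_nf y ->
  crit_nf (appM s y).
Proof.
move=> s0 aut_s y0 crit_y z z0 hzy.
pose w := appM (adjm s) z.
have sw : appM s w = scalept (mdet s) z by rewrite appM_adjm.
have w0 : nzpt w by apply: nzpt_appM; rewrite ?mdet_adjm.
have hw : pdet (appM s (nf w)) (nf z) = 0.
  have := aut_s w w0; rewrite sw nfZ pdetZr; exact: mulf_eq0_r (expf_neq0 _ s0).
have : pdet (appM s (nf w)) (appM s (nf y)) = 0.
  apply: (pdet0_trans _ hw); first exact: nzpt_nf.
  apply: (pdet0_trans _ hzy (pdet0_sym (aut_s y y0))).
  exact/nzpt_nf/nzpt_appM.
rewrite pdet_appM => /(mulf_eq0_r s0) /(crit_y w w0) hwy.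
apply: (mulf_eq0_r s0); rewrite -pdetZl -sw pdet_appM hwy mulr0 //.
Qed.

Lemma crit_nfP y : nzpt y -> crit_nf y -> y.1 * (a * y.1 + 2 * D * y.2) = 0.
Proof.
case: y => y1 y2 /= y0 crit_y.
(* z is the second point of the fibre through y. *)
pose z : pt := (D * y1, - (a * y1 + D * y2)).
have z0 : nzpt z.
  move: y0; rewrite !nzptE /z /=.
  have [-> /= h2|h1] := eqVneq y1 0; last by rewrite mulf_eq0 (negbTE D_neq0) h1.
  by rewrite !mulr0 eqxx add0r oppr_eq0 mulf_neq0.
have := crit_y z z0; rewrite /pdet /nf /z /= => h.
by rewrite (_ : _ * _ = D * y1 * y2 - - (a * y1 + D * y2) * y1); [apply: h | ]; ring.
Qed.

Lemma crit_nf0 : crit_nf (0, 1).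
Proof.
move=> [z1 z2] _; rewrite /pdet /nf /= => h.
have /eqP : z1 ^+ 2 = 0.
  apply: (@mulf_eq0_r _ (- (e * D))); first by rewrite oppr_eq0 mulf_neq0.
  by rewrite -[RHS]h; ring.
by rewrite expf_eq0 /= => /eqP ->; ring.
Qed.

(* The critical point other than 0, see crit_nfP. *)
Local Notation C := (- (2 * D), a).

Lemma crit_nfC : crit_nf C.
Proof.
move=> [z1 z2] _; rewrite /pdet /nf /= => h.
have /eqP : (a * z1 + 2 * D * z2) ^+ 2 = 0.
  by apply: (@mulf_eq0_r _ (e * D)); [rewrite mulf_neq0 | rewrite -[RHS]h; ring].
by rewrite expf_eq0 /= => /eqP h2; rewrite -h2; ring.
Qed.

Hypothesis a_neq0 : a != 0.

Lemma nf_period2C : pdet (nf (nf C)) C = 0 -> pdet (nf C) C = 0.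
Proof.
rewrite /pdet /nf /= => h.
have /eqP : 8 * e * D ^+ 2 - a ^+ 3 = 0.
  apply: (@mulf_eq0_r _ (2 * e * D ^+ 3 * a)); first by rewrite !mulf_neq0 ?expf_neq0 ?two_neq0.
  by rewrite -[RHS]h; ring.
rewrite subr_eq0 => /eqP a3.
by transitivity (- D * (a ^+ 3 - 8 * e * D ^+ 2)); [ring | rewrite a3 subrr mulr0].
Qed.

Lemma aut_nf_fix0 s1 s3 s4 : mdet (s1, 0, s3, s4) != 0 -> aut_nf (s1, 0, s3, s4) ->
  s3 = 0 /\ s1 = s4.
Proof.
set s := (s1, 0, s3, s4) => s0 aut_s.
have [s1_0 s4_0] : s1 != 0 /\ s4 != 0.
  by move: s0; rewrite /= mul0r subr0 mulf_eq0 negb_or => /andP.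
have s3_0 : s3 = 0.
  have := aut_s (0, 1); rewrite nzptE oner_neq0 orbT /pdet /nf /= => /(_ isT) h.
  apply: (@mulf_eq0_r _ (- (D ^+ 2 * s4 ^+ 2))); first by rewrite oppr_eq0 mulf_neq0 ?expf_neq0.
  by rewrite -[RHS]h; ring.
split=> //.
have C0 : nzpt C by rewrite nzptE /= a_neq0 orbT.
have := crit_nfP (nzpt_appM s0 C0) (crit_nf_aut s0 aut_s C0 crit_nfC).
rewrite /= s3_0 => h.
have /eqP : s4 - s1 = 0.
  apply: (@mulf_eq0_r _ (- (4 * a * D ^+ 2 * s1))).
    by rewrite oppr_eq0 !mulf_neq0 ?expf_neq0 ?pnatr_eq0.
  by rewrite -[RHS]h; ring.
by rewrite subr_eq0 => /eqP.
Qed.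

Lemma aut_nf_move0 s1 s2 s3 s4 : s2 != 0 -> mdet (s1, s2, s3, s4) != 0 ->
  ~ aut_nf (s1, s2, s3, s4).
Proof.
set s := (s1, s2, s3, s4) => s2_0 s0 aut_s.
pose O : pt := (0, 1); pose I : pt := (1, 0).
have O0 : nzpt O by rewrite nzptE oner_neq0 orbT.
have I0 : nzpt I by rewrite nzptE oner_neq0.
have C0 : nzpt C by rewrite nzptE /= a_neq0 orbT.
have sO0 : nzpt (appM s O) := nzpt_appM s0 O0.
have sOC : pdet (appM s O) C = 0.
  have := crit_nfP sO0 (crit_nf_aut s0 aut_s O0 crit_nf0).
  rewrite /= !mulr0 !add0r !mulr1 => /(mulf_eq0_r s2_0) h.
  by transitivity (a * s2 + 2 * D * s4); [rewrite /pdet /=; ring | exact: h].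
have sI_nfC : pdet (appM s I) (nf C) = 0.
  have := aut_s O O0; rewrite (_ : nf O = scalept D I); last first.
    by rewrite /nf /scalept /=; congr pair; ring.
  rewrite appMZ pdetZl => /(mulf_eq0_r D_neq0) h.
  by apply: (pdet0_trans _ h (nf_pdet0 C0 sOC)); apply: nzpt_nf.
have sO_nfsI : pdet (appM s O) (nf (appM s I)) = 0.
  have := aut_s I I0; rewrite (_ : nf I = scalept e O); last first.
    by rewrite /nf /scalept /=; congr pair; ring.
  by rewrite appMZ pdetZl => /(mulf_eq0_r e_neq0).
have C_period2 : pdet (nf (nf C)) C = 0.
  apply: (pdet0_trans _ (pdet0_sym (nf_pdet0 (nzpt_nf C0) sI_nfC))).
    exact/nzpt_nf/nzpt_appM.
  exact: pdet0_trans sO0 (pdet0_sym sO_nfsI) sOC.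
have : pdet (appM s I) (appM s O) = 0.
  apply: (pdet0_trans (nzpt_nf C0) sI_nfC).
  exact: (pdet0_trans C0 (nf_period2C C_period2) (pdet0_sym sOC)).
by rewrite pdet_appM /pdet /= mulr1 mulr0 subr0 mulr1 => /eqP; apply/negP.
Qed.

Lemma aut_nf_scalar s : mdet s != 0 -> aut_nf s -> is_scalar_mob s.
Proof.
case: s => [[[s1 s2] s3] s4] s0 aut_s.
have [s2_0|s2_0] := eqVneq s2 0; last by case: (aut_nf_move0 s2_0 s0 aut_s).
by move: s0 aut_s; rewrite s2_0 => s0 /(aut_nf_fix0 s0) [].
Qed.

End NormalForm.

Lemma crit_cycle_normal_form (phi : hmap2) P :
  deg2 phi -> periodic2 phi P -> critical phi P ->
  exists m, mdet m != 0 /\ exists a e, e != 0 /\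
    forall q, appM (adjm m) (app2 phi (appM m q)) = nf a (mdet m) e q.
Proof.
case: P => p1 p2 deg_phi [_ [per nfix]] [_ [cc crit]].
set P : pt := (p1, p2) in per nfix crit.
set R := app2 phi P in per nfix.
pose m : mob algC := (R.1, p1, R.2, p2).
have m0 : mdet m != 0.
  by move: nfix; rewrite peqE /pdet /=; apply: contra => /eqP h; apply/eqP; rewrite -h; ring.
exists m; split=> //.
(* The X^2-coefficient of the first component vanishes since phi R = P, see R_per. *)
pose a := p2 * (feval phi.1 (R.1 + p1, R.2 + p2) - feval phi.1 R - feval phi.1 P)
          - p1 * (feval phi.2 (R.1 + p1, R.2 + p2) - feval phi.2 R - feval phi.2 P).
pose e := - cc * mdet m ^+ 2.
have R_per : p2 * feval phi.1 R - p1 * feval phi.2 R = 0.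
  by move: per; rewrite peqE /pdet /= => /eqP h; rewrite -[RHS]h; ring.
have nfE q : appM (adjm m) (app2 phi (appM m q)) = nf a (mdet m) e q.
  case: q => q1 q2; rewrite /nf /=; congr pair.
  - rewrite (feval_lincomb phi.1 R P (q1, q2)) (feval_lincomb phi.2 R P (q1, q2)) /=.
    transitivity (q1 ^+ 2 * (p2 * feval phi.1 R - p1 * feval phi.2 R)
                  + (a * q1 * q2 + mdet m * q2 ^+ 2)); last by rewrite R_per mulr0 add0r.
    by rewrite /a /R /=; ring.
  - have := crit (R.1 * q1 + p1 * q2, R.2 * q1 + p2 * q2); rewrite /= => h.
    transitivity (- (feval phi.1 (R.1 * q1 + p1 * q2, R.2 * q1 + p2 * q2) * feval phi.2 P
                     - feval phi.2 (R.1 * q1 + p1 * q2, R.2 * q1 + p2 * q2) * feval phi.1 P)).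
      by rewrite /R /=; ring.
    by rewrite h /e /R /=; ring.
exists a, e; split=> //.
have : nzpt (appM (adjm m) (app2 phi (appM m (1, 0)))).
  by apply/nzpt_appM/deg_phi/nzpt_appM; rewrite ?mdet_adjm // nzptE oner_neq0.
by rewrite nfE nzptE /nf /= !mulr0 expr0n /= mulr0 addr0 eqxx expr1n mulr1.
Qed.

Lemma nontrivial_aut_nf (phi : hmap2) m a e :
  mdet m != 0 -> (forall q, appM (adjm m) (app2 phi (appM m q)) = nf a (mdet m) e q) ->
  nontrivial_aut phi -> exists s, [/\ mdet s != 0, aut_nf a (mdet m) e s & ~ is_scalar_mob s].
Proof.
move=> m0 nfE [s [s_ok [[P [_ moved]] comm]]].
have s0 : mdet s != 0 by rewrite -mob_okE.
pose t := mmul (adjm m) (mmul s m).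
have tE q : appM t q = appM (adjm m) (appM s (appM m q)) by rewrite !appM_mmul.
exists t; split.
- by rewrite !mdet_mmul mdet_adjm !mulf_neq0.
- move=> q q0; rewrite -!nfE !tE !appM_adjm app2Z !appMZ pdetZl pdetZr pdet_appM.
  by move: (comm _ (nzpt_appM m0 q0)); rewrite peqE => /eqP ->; rewrite !mulr0.
- move=> /is_scalar_mobP [k tk].
  have := tk (appM (adjm m) P); rewrite tE appM_adjm !appMZ => h.
  have : pdet (scalept (mdet m) (appM (adjm m) (appM s P))) (appM (adjm m) P) = 0.
    by rewrite h pdetZl pdetxx mulr0.
  rewrite pdetZl pdet_appM mdet_adjm => /(mulf_eq0_r m0) /(mulf_eq0_r m0) /eqP.
  by rewrite -peqE; apply/negP.
Qed.

Definition invsq (c e : algC) (u : pt) : pt := (c * u.2 ^+ 2, e * u.1 ^+ 2).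
Definition conj_invsq (m : mob algC) (c e : algC) (p : pt) : pt :=
  appM m (invsq c e (appM (adjm m) p)).

Lemma invsqZ c e k u : invsq c e (scalept k u) = scalept (k ^+ 2) (invsq c e u).
Proof. by rewrite /invsq /scalept /=; congr pair; ring. Qed.

Lemma nf0_conj_invsq (phi : hmap2) m e : mdet m != 0 ->
  (forall q, appM (adjm m) (app2 phi (appM m q)) = nf 0 (mdet m) e q) ->
  forall p, app2 phi p = conj_invsq m (mdet m ^- 2) (e / mdet m ^+ 3) p.
Proof.
move=> m0 nfE p.
have := congr1 (appM m) (nfE (appM (adjm m) p)).
rewrite !appM_adjm app2Z => h.
have -> : app2 phi p = scalept (mdet m ^- 3) (appM m (nf 0 (mdet m) e (appM (adjm m) p))).
  by rewrite -h /scalept /=; congr pair; field.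
rewrite -appMZ /conj_invsq; congr (appM m _).
by rewrite /nf /invsq /scalept /=; congr pair; field.
Qed.

Lemma crit_cycle_aut_conj_invsq (phi : hmap2) :
  deg2 phi -> (exists P, periodic2 phi P /\ critical phi P) -> nontrivial_aut phi ->
  exists m c e, [/\ mdet m != 0, c != 0, e != 0 & forall p, app2 phi p = conj_invsq m c e p].
Proof.
move=> deg_phi [P [perP critP]] aut_phi.
have [m [m0 [a [e [e0 nfE]]]]] := crit_cycle_normal_form deg_phi perP critP.
have a0 : a = 0.
  apply/eqP/negPn/negP => a0.
  have [s [s0 aut_s not_scalar]] := nontrivial_aut_nf m0 nfE aut_phi.
  exact: not_scalar (aut_nf_scalar m0 e0 a0 s0 aut_s).
rewrite a0 in nfE.
exists m, (mdet m ^- 2), (e / mdet m ^+ 3); split=> //.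
- by rewrite invr_eq0 expf_neq0.
- by rewrite mulf_neq0 ?invr_eq0 ?expf_neq0.
- exact: nf0_conj_invsq.
Qed.

(* Up to scalars, orbit_mob x0 x1 x2 maps oo, 0, 1 to x0, x1, x2, the last by
   Cramer's rule. *)
Definition orbit_mob (R : comPzRingType) (x0 x1 x2 : R * R) : mob R :=
  (pdet x2 x1 * x0.1, pdet x0 x2 * x1.1, pdet x2 x1 * x0.2, pdet x0 x2 * x1.2).

Definition orbit_param (R : fieldType) (x0 x1 x2 : R * R) : R :=
  - (pdet x2 x1 ^+ 2 * pdet x0 x1) / pdet x0 x2 ^+ 3.

Definition psiv (v : algC) (p : pt) : pt := (2 * p.1 * p.2 - p.2 ^+ 2, v * p.1 ^+ 2 - p.2 ^+ 2).

Lemma mdet_orbit_mob (x0 x1 x2 : pt) :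
  mdet (orbit_mob x0 x1 x2) = pdet x2 x1 * pdet x0 x2 * pdet x0 x1.
Proof. by rewrite /orbit_mob /pdet /=; ring. Qed.

Section ConjInvsq.

Variables (m : mob algC) (c e : algC).
Local Notation phi := (conj_invsq m c e).

Lemma conj_invsqZ k p : phi (scalept k p) = scalept (k ^+ 2) (phi p).
Proof. by rewrite /conj_invsq !appMZ invsqZ appMZ. Qed.

Lemma conj_invsq2 p :
  phi (phi p) = scalept (mdet m ^+ 2) (appM m (invsq c e (invsq c e (appM (adjm m) p)))).
Proof. by rewrite {1}/conj_invsq adjm_appM invsqZ appMZ. Qed.

(* The excluded u are the critical 2-cycle 0, oo of u |-> (c/e)/u^2, its fixed
   points u^3 = c/e, and their other preimages u^3 = -c/e. *)
Definition invsq_generic (p : pt) : bool :=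
  let u := appM (adjm m) p in u.1 * u.2 * (e ^+ 2 * u.1 ^+ 6 - c ^+ 2 * u.2 ^+ 6) != 0.

Hypotheses (m0 : mdet m != 0) (c0 : c != 0) (e0 : e != 0).

Lemma conj_invsq_orbit p : invsq_generic p ->
  [/\ pdet p (phi p) != 0, pdet p (phi (phi p)) != 0 & pdet (phi (phi p)) (phi p) != 0].
Proof.
rewrite /invsq_generic; set u := appM (adjm m) p => gen.
have [u1_0 u2_0 fix1 fix2] : [/\ u.1 != 0, u.2 != 0,
    e * u.1 ^+ 3 - c * u.2 ^+ 3 != 0 & e * u.1 ^+ 3 + c * u.2 ^+ 3 != 0].
  move: gen; rewrite (_ : _ - _ = (e * u.1 ^+ 3 - c * u.2 ^+ 3) * (e * u.1 ^+ 3 + c * u.2 ^+ 3)).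
    by rewrite !mulf_eq0 !negb_or => /andP [/andP [-> ->] /andP [-> ->]].
  by ring.
have E01 : pdet p (phi p) = e * u.1 ^+ 3 - c * u.2 ^+ 3.
  by rewrite /conj_invsq pdet_adjm -/u /pdet /invsq /=; ring.
have E02 : pdet p (phi (phi p)) =
    - (mdet m ^+ 2 * c * e * u.1 * u.2 * (e * u.1 ^+ 3 - c * u.2 ^+ 3)).
  by rewrite conj_invsq2 pdetZr pdet_adjm -/u /pdet /invsq /=; ring.
have E21 : pdet (phi (phi p)) (phi p) = mdet m ^+ 3 * c * e *
    ((e * u.1 ^+ 3 - c * u.2 ^+ 3) * (e * u.1 ^+ 3 + c * u.2 ^+ 3)).
  by rewrite conj_invsq2 /conj_invsq pdetZl pdet_appM -/u /pdet /invsq /=; ring.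
split; first by rewrite E01.
- by rewrite E02 oppr_eq0 !mulf_neq0 ?expf_neq0.
- by rewrite E21 !mulf_neq0 ?expf_neq0.
Qed.

Lemma exists_invsq_generic_nat : exists t : nat, invsq_generic (t%:R, 1).
Proof.
move: m0; rewrite /invsq_generic; case: m => [[[m1 m2] m3] m4] /= det0.
pose q1 : {poly algC} := m4 *: 'X + (- m2)%:P.
pose q2 : {poly algC} := (- m3) *: 'X + m1%:P.
pose q3 := e ^+ 2 *: q1 ^+ 6 - c ^+ 2 *: q2 ^+ 6.
have q1E x : q1.[x] = m4 * x - m2 by rewrite /q1 !hornerE.
have q2E x : q2.[x] = - m3 * x + m1 by rewrite /q2 !hornerE.
have q3E x : q3.[x] = e ^+ 2 * q1.[x] ^+ 6 - c ^+ 2 * q2.[x] ^+ 6 by rewrite /q3 !hornerE.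
have q1_0 : q1 != 0.
  apply: lin_poly_neq0; apply: contraNT det0; rewrite negb_or oppr_eq0 !negbK.
  by move=> /andP [/eqP -> /eqP ->]; rewrite mulr0 mul0r subrr eqxx.
have q2_0 : q2 != 0.
  apply: lin_poly_neq0; apply: contraNT det0; rewrite negb_or oppr_eq0 !negbK.
  by move=> /andP [/eqP -> /eqP ->]; rewrite mulr0 mul0r subrr eqxx.
have q3_0 : q3 != 0.
  have neq0_at x : q3.[x] != 0 -> q3 != 0 by apply: contraNneq => ->; rewrite horner0.
  have [m3_0|m3_0] := eqVneq m3 0.
  - move: det0; rewrite m3_0 mulr0 subr0 mulf_eq0 negb_or => /andP [m1_0 m4_0].
    apply: (neq0_at (m2 / m4)); rewrite q3E q1E q2E m3_0.
    rewrite (_ : _ - _ = - (c ^+ 2 * m1 ^+ 6)) ?oppr_eq0 ?mulf_neq0 ?expf_neq0 //.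
    by rewrite (_ : m4 * (m2 / m4) - m2 = 0); [ring | field].
  - apply: (neq0_at (m1 / m3)); rewrite q3E q1E q2E.
    rewrite (_ : _ - _ = e ^+ 2 * ((m1 * m4 - m2 * m3) / m3) ^+ 6);
      last by rewrite (_ : - m3 * (m1 / m3) + m1 = 0); field.
    by rewrite !mulf_neq0 ?expf_neq0 ?invr_eq0.
have [t] := exists_nat_nonroot (mulf_neq0 (mulf_neq0 q1_0 q2_0) q3_0).
rewrite /root !hornerM q3E q1E q2E => nonroot; exists t.
by apply: contra nonroot => /eqP <-; apply/eqP; ring.
Qed.

(* The conjugates of [cY^2 : eX^2] are divergence free as pairs of quadratic forms,
   so they are determined by their values at (1, 0) and (0, 1). *)
Lemma conj_invsq_divfree (t : mob algC) (psi : pt -> pt) p :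
  (forall q, psi q = appM (adjm t) (phi (appM t q))) ->
  psi p =
    (p.1 ^+ 2 * (psi (1, 0)).1 - 2 * p.1 * p.2 * (psi (0, 1)).2 + p.2 ^+ 2 * (psi (0, 1)).1,
     p.1 ^+ 2 * (psi (1, 0)).2 - 2 * p.1 * p.2 * (psi (1, 0)).1 + p.2 ^+ 2 * (psi (0, 1)).2).
Proof.
move=> psiE; rewrite !psiE /conj_invsq {psiE}.
case: t m => [[[t1 t2] t3] t4] [[[m1 m2] m3] m4] /=.
by congr pair; ring.
Qed.

Lemma conj_invsq_psiv x0 x1 x2 : x1 = phi x0 -> x2 = phi x1 -> pdet x0 x2 != 0 ->
  forall p, scalept (mdet (orbit_mob x0 x1 x2)) (phi (appM (orbit_mob x0 x1 x2) p)) =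
    scalept (- (pdet x0 x2 ^+ 3 * pdet x2 x1))
      (appM (orbit_mob x0 x1 x2) (psiv (orbit_param x0 x1 x2) p)).
Proof.
move=> E1 E2 d02 p; set t := orbit_mob x0 x1 x2.
pose psi q := appM (adjm t) (phi (appM t q)).
have psi10 : psi (1, 0) = (0, pdet x2 x1 ^+ 3 * pdet x0 x1).
  rewrite /psi (_ : appM t (1, 0) = scalept (pdet x2 x1) x0); last first.
    by rewrite /t /orbit_mob /scalept /=; congr pair; ring.
  by rewrite conj_invsqZ -E1 appMZ /t /orbit_mob /scalept /pdet /=; congr pair; ring.
have psi01 : psi (0, 1) = (pdet x0 x2 ^+ 3 * pdet x2 x1, pdet x0 x2 ^+ 3 * pdet x2 x1).
  rewrite /psi (_ : appM t (0, 1) = scalept (pdet x0 x2) x1); last first.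
    by rewrite /t /orbit_mob /scalept /=; congr pair; ring.
  by rewrite conj_invsqZ -E2 appMZ /t /orbit_mob /scalept /pdet /=; congr pair; ring.
have psiE : psi p = scalept (- (pdet x0 x2 ^+ 3 * pdet x2 x1)) (psiv (orbit_param x0 x1 x2) p).
  rewrite (@conj_invsq_divfree t psi p) // psi10 psi01 /scalept /psiv /orbit_param /=.
  by congr pair; field.
by rewrite -appMZ -psiE /psi appM_adjm.
Qed.

End ConjInvsq.

Definition ratpt (p : rat * rat) : pt := (ratr p.1, ratr p.2).
Definition fevalQ (f : form2 rat) (p : rat * rat) : rat :=
  let: (a, b, c) := f in a * p.1 ^+ 2 + b * p.1 * p.2 + c * p.2 ^+ 2.
Definition app2Q (F G : form2 rat) (p : rat * rat) : rat * rat := (fevalQ F p, fevalQ G p).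

Lemma app2_ratpt F G p : app2 (hmapQ F G) (ratpt p) = ratpt (app2Q F G p).
Proof.
case: F G => [[a1 b1] c1] [[a2 b2] c2].
by rewrite /app2 /ratpt /feval /fevalQ /=; congr pair; rewrite !rmorphD !rmorphM.
Qed.

Lemma pdet_ratpt p q : pdet (ratpt p) (ratpt q) = ratr (pdet p q).
Proof. by rewrite /pdet /= rmorphB !rmorphM. Qed.

Lemma orbit_mob_ratpt x0 x1 x2 :
  mratr (orbit_mob x0 x1 x2) = orbit_mob (ratpt x0) (ratpt x1) (ratpt x2).
Proof. by rewrite /orbit_mob /mratr !rmorphM !pdet_ratpt. Qed.

Lemma orbit_param_ratpt x0 x1 x2 :
  ratr (orbit_param x0 x1 x2) = orbit_param (ratpt x0) (ratpt x1) (ratpt x2).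
Proof. by rewrite /orbit_param fmorph_div rmorphN rmorphM !rmorphXn !pdet_ratpt. Qed.

Lemma app2_psi v p : app2 (hmapQ psiF (psiG v)) p = psiv (ratr v) p.
Proof.
rewrite /app2 /hmapQ /psiF /psiG /fratr /feval /psiv /= rmorph0 rmorphN rmorph1.
by rewrite (_ : ratr 2 = 2) ?ratr_nat //; congr pair; ring.
Qed.

Lemma lin_conj_Q_psiv (phi : hmap2) (s : mob rat) (v : rat) k1 k2 :
  deg2 phi -> mdet (mratr s) != 0 -> k1 != 0 ->
  (forall p, scalept k1 (app2 phi (appM (mratr s) p)) =
             scalept k2 (appM (mratr s) (psiv (ratr v) p))) ->
  v != 0 /\ v != 4 /\ lin_conj_Q phi (hmapQ psiF (psiG v)).
Proof.
move=> deg_phi s0 k1_0 conj.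
have psiv0 p : nzpt p -> nzpt (psiv (ratr v) p).
  move=> p0; have := nzptZ k1_0 (deg_phi _ (nzpt_appM s0 p0)); rewrite conj.
  apply: contraTT => /negPn /eqP ->.
  by case: (mratr s) => [[[? ?] ?] ?]; rewrite /nzpt /scalept /= !mulr0 !addr0 mulr0 eqxx.
split; [|split].
- apply/eqP => v0; have := psiv0 (1, 0); rewrite v0 rmorph0.
  rewrite (_ : psiv 0 (1, 0) = (0, 0)); last by rewrite /psiv /=; congr pair; ring.
  by rewrite nzptE oner_neq0 /nzpt eqxx => /(_ isT).
- apply/eqP => v4; have := psiv0 (1, 2); rewrite v4 (_ : ratr 4 = 4) ?ratr_nat //.
  rewrite (_ : psiv 4 (1, 2) = (0, 0)); last by rewrite /psiv /=; congr pair; ring.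
  by rewrite nzptE oner_neq0 /nzpt eqxx => /(_ isT).
- exists s; split; first by rewrite mob_okE.
  move=> p _; rewrite app2_psi peqE; apply/eqP; apply: (mulf_eq0_r k1_0).
  by rewrite -pdetZl conj pdetZl pdetxx mulr0.
Qed.

Theorem lemma2p6 (F G : form2 rat) :
  deg2 (hmapQ F G) ->
  (exists P : pt, periodic2 (hmapQ F G) P /\ critical (hmapQ F G) P) ->
  nontrivial_aut (hmapQ F G) ->
  exists v : rat, v != 0 /\ v != 4 /\ lin_conj_Q (hmapQ F G) (hmapQ psiF (psiG v)).
Proof.
move=> deg_phi crit_cycle aut_phi.
have [m [c [e [m0 c0 e0 phiE]]]] := crit_cycle_aut_conj_invsq deg_phi crit_cycle aut_phi.
have [t gen] := exists_invsq_generic_nat m0 c0 e0.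
pose x0 : rat * rat := (t%:R, 1); pose x1 := app2Q F G x0; pose x2 := app2Q F G x1.
have E0 : ratpt x0 = (t%:R, 1) by rewrite /ratpt /= ratr_nat rmorph1.
have E1 : ratpt x1 = conj_invsq m c e (ratpt x0) by rewrite -phiE app2_ratpt.
have E2 : ratpt x2 = conj_invsq m c e (ratpt x1) by rewrite -phiE app2_ratpt.
rewrite -E0 in gen; have [d01 d02 d21] := conj_invsq_orbit m0 c0 e0 gen.
rewrite -E1 -E2 in d01 d02 d21.
exists (orbit_param x0 x1 x2).
apply: (lin_conj_Q_psiv (s := orbit_mob x0 x1 x2) deg_phi _ _
          (k1 := mdet (orbit_mob (ratpt x0) (ratpt x1) (ratpt x2)))).
- by rewrite orbit_mob_ratpt mdet_orbit_mob !mulf_neq0.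
- by rewrite mdet_orbit_mob !mulf_neq0.
move=> p; rewrite orbit_mob_ratpt orbit_param_ratpt phiE.
exact: conj_invsq_psiv.
Qed.
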